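(* Let $c\ge2$, $d\ge1$, and let $Y\subseteq\Sigma^c$ be a zero-set with $|Y|=4$. Then $Y$ survives $d$ rounds of tornado tabulation with probability $\left(\left(3-2/|\Sigma|\right)/|\Sigma|\right)^d$.
   Context: Let $\Sigma=\{0,\dots,2^k-1\}$, identified with $k$-bit strings, $\oplus$ bitwise xor. A simple tabulation hash function $g:\Sigma^b\to\Sigma$ is $g(x_1\cdots x_b)=T_1[x_1]\oplus\cdots\oplus T_b[x_b]$ with independent fully random tables $T_i:\Sigma\to\Sigma$. Let $\tilde h_1,\dots,\tilde h_d$ be mutually independent simple tabulation functions with $\tilde h_i:\Sigma^{c+i-1}\to\Sigma$. The simple derived key of $x=x_1\cdots x_c$ is $\tilde h'(x)=\tilde x_1\cdots\tilde x_{c+d}$ with $\tilde x_i=x_i$ for $i\le c$ and $\tilde x_i=\tilde h_{i-c}(\tilde x_1\cdots\tilde x_{i-1})$ for $c<i\le c+d$. A set $Y$ of keys in $\Sigma^b$ is a zero-set if for every position $i$ and every character $a$, the number of $y\in Y$ with $y_i=a$ is even. A zero-set $Y\subseteq\Sigma^c$ survives $d$ rounds of tornado tabulation if $\tilde h'(Y)\subseteq\Sigma^{c+d}$ is a zero-set. *)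

From mathcomp Require Import all_boot all_order all_algebra.
Set Implicit Arguments. Unset Strict Implicit. Unset Printing Implicit Defensive.
Import Order.TTheory GRing.Theory Num.Theory.
Local Open Scope ring_scope.

(* The alphabet Sigma = k-bit strings; bitwise xor = addition in 'F_2^k. *)
Definition Sigma (k : nat) := 'rV['F_2]_k.

Definition key (k b : nat) := {ffun 'I_b -> Sigma k}.

(* Simple tabulation with tables T : 'I_b -> (Sigma -> Sigma), applied to a
   key given as a sequence of characters (only the first b are used). *)
Definition simple_tab (k b : nat) (T : {ffun 'I_b -> {ffun Sigma k -> Sigma k}})
  (x : seq (Sigma k)) : Sigma k :=
  \sum_(j < b) T j (nth 0 x j).

(* All the random tables for d rounds: round i (0-indexed) is a simple
   tabulation function on Sigma^(c+i). *)
Definition tables (k c d : nat) :=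
  {dffun forall i : 'I_d, {ffun 'I_(c + i) -> {ffun Sigma k -> Sigma k}}}.

Definition derived_seq (k c d : nat) (tab : tables k c d) (x : key k c)
  : seq (Sigma k) :=
  foldl (fun s (i : 'I_d) => rcons s (simple_tab (tab i) s))
        [seq x j | j <- enum 'I_c] (enum 'I_d).

Definition derived_key (k c d : nat) (tab : tables k c d) (x : key k c)
  : key k (c + d) :=
  [ffun j : 'I_(c + d) => nth 0 (derived_seq tab x) j].

Definition zero_set (k b : nat) (Y : {set key k b}) : bool :=
  [forall i : 'I_b, forall a : Sigma k, ~~ odd #|[set y in Y | y i == a]|].

Definition survives (k c d : nat) (Y : {set key k c}) (tab : tables k c d) : bool :=
  zero_set (derived_key tab @: Y).

(* Probability over uniformly random (fully random, independent) tables. *)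
Definition survive_prob (k c d : nat) (Y : {set key k c}) : rat :=
  (#|[set tab : tables k c d | survives Y tab]|%:R
     / #|{: tables k c d}|%:R).

From mathcomp Require Import all_boot all_order all_algebra.
From mathcomp Require Import zify ring.
Import GRing.Theory Num.Theory.
Local Open Scope ring_scope.
Set Implicit Arguments. Unset Strict Implicit. Unset Printing Implicit Defensive.

(* Let Y = {x0, x1, x2, x3}. At every position the four characters of a zero-set
   of size 4 pair up, and as the keys are distinct there are positions j1, j2 where
   they pair as {x0, x2}{x1, x3}, resp. {x0, x1}{x2, x3}, with two distinct values.
   A round with table T keeps a zero-set iff the four new characters h(xi) pair up.
   The positionwise pairing forces h(x0) + h(x1) + h(x2) + h(x3) = 0, so in
   characteristic 2 this happens iff (h(x0) + h(x1), h(x0) + h(x2)) lies in the set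
   of pairs (u, v) with u = 0, v = 0 or u = v, which has 3|Sigma| - 2 elements.
   Adding (u, v) to the entries of T at (j1, x0 j1) and (j2, x0 j2) translates that
   pair by (u, v), so it is uniform on Sigma^2 and every round succeeds with
   probability (3|Sigma| - 2) / |Sigma|^2, whatever the earlier tables were. *)

Definition paired4 (T : eqType) (a b c d : T) :=
  [|| (a == b) && (c == d), (a == c) && (b == d) | (a == d) && (b == c)].

Section Pairing.
Variable T : eqType.
Implicit Types a b c d : T.

Lemma paired4_map (U : eqType) (f : T -> U) a b c d :
  paired4 a b c d -> paired4 (f a) (f b) (f c) (f d).
Proof. by case/or3P => /andP[/eqP-> /eqP->]; rewrite /paired4 !eqxx ?orbT. Qed.

Lemma paired4_neq a b c d : a != b ->
  paired4 a b c d = (a == c) && (b == d) || (a == d) && (b == c).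
Proof. by rewrite /paired4 => /negbTE->. Qed.

Definition matched_at (I : Type) (f0 f1 f2 f3 : I -> T) (j : I) :=
  [&& f0 j == f2 j, f1 j == f3 j & f0 j != f1 j].

Lemma matched_atC (I : Type) (f0 f1 f2 f3 : I -> T) (j : I) :
  matched_at f0 f1 f2 f3 j -> matched_at f0 f3 f2 f1 j.
Proof. by case/and3P => eq02 /eqP eq13; rewrite /matched_at eq02 eq13 eqxx. Qed.

End Pairing.

Lemma even_count_mem4 (T : finType) (a b c d : T) :
  [forall e, ~~ odd (count_mem e [:: a; b; c; d])] = paired4 a b c d.
Proof.
apply/forallP/idP => [even|]; last first.
  by case/or3P => /andP[/eqP<- /eqP<-] e /=; do 2!case: (_ == e).
move: (even a) (even b) (even c); rewrite /paired4 /= !eqxx.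
case: (eqVneq a b) => [<-|nab] /=.
  by move=> _ _; rewrite (eq_sym d); case: (a == c); case: (c == d).
rewrite (eq_sym c a) (eq_sym d a) (eq_sym c b) (eq_sym d b).
case: (eqVneq a c) => [<-|nac] /=.
  by rewrite [b == a]eq_sym (negbTE nab); case: (a == d); case: (b == d).
by case: (eqVneq a d) => [<-|//]; rewrite [b == a]eq_sym (negbTE nab); case: (b == c).
Qed.

Lemma card_set_pair (A B : finType) (P : A -> B -> bool) :
  #|[set p : A * B | P p.1 p.2]| = (\sum_(a : A) #|[set b | P a b]|)%N.
Proof.
rewrite -sum1dep_card big_mkcond /= -(pair_big predT predT (fun a b => P a b : nat)) /=.
by apply: eq_bigr => a _; rewrite -sum1dep_card [RHS]big_mkcond.
Qed.

Lemma card_imset_count (A B : finType) (Y : {set A}) (f : A -> B) (P : pred B) s :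
  injective f -> perm_eq (enum Y) s -> #|[set y in f @: Y | P y]| = count (P \o f) s.
Proof.
move=> f_inj Y_enum.
rewrite -sum1dep_card big_mkcondr big_imset /=; last by move=> x y _ _; apply: f_inj.
by rewrite -big_mkcondr -big_enum_cond (perm_big _ Y_enum) sum1_count.
Qed.

Lemma card_preim_shift (A B : finType) (f : A -> B) (b0 : B) (shift : B -> A -> A)
    (Q : {pred B}) :
  (forall z, injective (shift z)) -> (forall z x, (f (shift z x) == z) = (f x == b0)) ->
  (#|[set x | f x \in Q]| * #|{: B}| = #|Q| * #|{: A}|)%N.
Proof.
move=> shift_inj shift_fiber.
have card_fiber z : #|[set x | f x == z]| = #|[set x | f x == b0]|.
  rewrite -(card_preimset _ (shift_inj z)); apply: eq_card => x.
  by rewrite !inE shift_fiber.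
have card_preim (P : {pred B}) : #|[set x | f x \in P]| = (#|P| * #|[set x | f x == b0]|)%N.
  rewrite -sum1dep_card (partition_big f P) // -sum_nat_const.
  apply: eq_bigr => z Pz; rewrite -(card_fiber z) sum1dep_card.
  by apply: eq_card => x; rewrite !inE andbC; case: eqP => // ->.
have card_A : #|{: A}| = (#|{: B}| * #|[set x | f x == b0]|)%N.
  by rewrite -card_preim; apply: eq_card => x; rewrite inE.
by rewrite card_preim card_A mulnA mulnAC.
Qed.

Section CharacteristicTwo.
Variable k : nat.
Implicit Types a b c d x : Sigma k.

Lemma card_Sigma_gt0 : (0 < #|{: Sigma k}|)%N.
Proof. by apply/card_gt0P; exists 0. Qed.

Lemma addrr_Sigma x : x + x = 0.
Proof.
have two0 : 2 = 0 :> 'F_2 by apply/val_inj.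
by rewrite -mulr2n -scaler_nat two0 scale0r.
Qed.

Lemma oppr_Sigma x : - x = x.
Proof. by apply: (addrI x); rewrite subrr addrr_Sigma. Qed.

Lemma paired4_sum0 a b c d : paired4 a b c d -> a + b + c + d = 0.
Proof.
case/or3P => /andP[/eqP<- /eqP<-].
- by rewrite (addrr_Sigma a) add0r addrr_Sigma.
- by rewrite (addrAC a) (addrr_Sigma a) add0r addrr_Sigma.
- by rewrite -(addrA a) (addrr_Sigma b) addr0 addrr_Sigma.
Qed.

Definition collision_set : {set Sigma k * Sigma k} :=
  [set z | [|| z.1 == 0, z.2 == 0 | z.1 == z.2]].

Lemma paired4_collision a b c d : a + b + c + d = 0 ->
  paired4 a b c d = ((a + b, a + c) \in collision_set).
Proof.
move/eqP; rewrite addr_eq0 oppr_Sigma => /eqP <-.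
rewrite /paired4 inE /= (inj_eq (addrI a)) !addr_eq0 !oppr_Sigma.
case: (eqVneq a b) => [<-|nab] /=; first by rewrite addrr_Sigma add0r eqxx.
case: (eqVneq a c) => [<-|nac] /=; first by rewrite addrAC addrr_Sigma add0r eqxx.
case: (eqVneq b c) => [<-|nbc] /=; last by rewrite !andbF.
by rewrite -addrA addrr_Sigma addr0 eqxx.
Qed.

Lemma card_collision_set : (#|collision_set| + 2 = 3 * #|{: Sigma k}|)%N.
Proof.
have card_row u : #|[set v | (u, v) \in collision_set]| =
    if u == 0 then #|{: Sigma k}| else 2%N.
  case: eqVneq => [->|nu0]; first by apply: eq_card => v; rewrite !inE eqxx.
  transitivity #|[set 0; u]|; last by rewrite cards2 eq_sym nu0.
  by apply: eq_card => v; rewrite !inE /= (negbTE nu0) (eq_sym u).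
rewrite (eq_card (B := [set z | (z.1, z.2) \in collision_set])) => [|z]; last first.
  by rewrite inE -surjective_pairing.
rewrite (card_set_pair (fun u v => (u, v) \in collision_set)).
under eq_bigr do rewrite card_row.
rewrite (bigD1 0) //= eqxx (eq_bigr (fun _ => 2%N)) => [|u /negbTE->//].
have := card_Sigma_gt0; rewrite sum_nat_const cardC1.
by set N := #|{: Sigma k}|; lia.
Qed.

End CharacteristicTwo.

Definition paired_upto k n (s0 s1 s2 s3 : seq (Sigma k)) :=
  [forall j : 'I_n, paired4 s0`_j s1`_j s2`_j s3`_j].

Lemma paired_upto_rcons k n (s0 s1 s2 s3 : seq (Sigma k)) a0 a1 a2 a3 :
  size s0 = n -> size s1 = n -> size s2 = n -> size s3 = n ->
  paired_upto n.+1 (rcons s0 a0) (rcons s1 a1) (rcons s2 a2) (rcons s3 a3) =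
  paired_upto n s0 s1 s2 s3 && paired4 a0 a1 a2 a3.
Proof.
move=> size0 size1 size2 size3; rewrite /paired_upto -!(big_andE xpredT) big_ord_recr /=.
rewrite !nth_rcons size0 size1 size2 size3 ltnn eqxx; congr andb.
by apply: eq_bigr => j _; rewrite !nth_rcons size0 size1 size2 size3 ltn_ord.
Qed.

Section Round.
Variables (k m : nat) (s0 s1 s2 s3 : seq (Sigma k)) (j1 j2 : 'I_m).
Hypothesis s_paired : paired_upto m s0 s1 s2 s3.
Hypothesis s_matched1 : matched_at (nth 0 s0) (nth 0 s1) (nth 0 s2) (nth 0 s3) j1.
Hypothesis s_matched2 : matched_at (nth 0 s0) (nth 0 s2) (nth 0 s1) (nth 0 s3) j2.

Local Notation table := {ffun 'I_m -> {ffun Sigma k -> Sigma k}}.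
Local Notation h T s := (simple_tab (T : table) s).

Definition round_diffs (T : table) : Sigma k * Sigma k :=
  (h T s0 + h T s1, h T s0 + h T s2).

Lemma paired4_round T :
  paired4 (h T s0) (h T s1) (h T s2) (h T s3) = (round_diffs T \in collision_set k).
Proof.
apply: paired4_collision; rewrite /simple_tab -!big_split /=.
by apply: big1 => j _; apply/paired4_sum0/paired4_map/(forallP s_paired).
Qed.

Definition shift_table (z : Sigma k * Sigma k) (T : table) : table :=
  [ffun j => [ffun x => T j x + (if (j == j1) && (x == s0`_j1) then z.1 else 0)
                              + (if (j == j2) && (x == s0`_j2) then z.2 else 0)]].

Lemma shift_table_inj z : injective (shift_table z).
Proof.
move=> T T' /ffunP eqT; apply/ffunP => j; apply/ffunP => x.
by move: (eqT j) => /ffunP /(_ x); rewrite !ffunE => /addIr /addIr.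
Qed.

Lemma simple_tab_shift z T s : h (shift_table z T) s =
  h T s + (if s`_j1 == s0`_j1 then z.1 else 0) + (if s`_j2 == s0`_j2 then z.2 else 0).
Proof.
have sum_at (j0 : 'I_m) b (u : Sigma k) :
    \sum_(j < m) (if (j == j0) && b j then u else 0) = if b j0 then u else 0.
  by rewrite (bigD1 j0) //= eqxx big1 ?addr0 // => j /negbTE->.
rewrite /simple_tab; under eq_bigr do rewrite !ffunE.
by rewrite !big_split /= !sum_at.
Qed.

(* The entry shifted at [j1] is read by [s0] and [s2] but not by [s1], the one
   shifted at [j2] by [s0] and [s1] but not by [s2]. *)
Lemma round_diffs_shift z T : round_diffs (shift_table z T) = round_diffs T + z.
Proof.
case/and3P: s_matched1 => /eqP eq02 /eqP eq13 neq01.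
case/and3P: s_matched2 => /eqP eq01 /eqP eq23 neq02.
rewrite /round_diffs !simple_tab_shift -eq02 -eq01 !eqxx ![_ == s0`__]eq_sym.
rewrite (negbTE neq01) (negbTE neq02) !addr0; case: z => u v; congr (_, _) => /=.
  by rewrite (addrACA _ v) (addrr_Sigma v) addr0 addrAC.
by rewrite (addrAC _ u v) (addrACA _ u) (addrr_Sigma u) addr0 addrAC.
Qed.

Lemma card_paired4_round :
  (#|[set T : table | paired4 (h T s0) (h T s1) (h T s2) (h T s3)]| * #|{: Sigma k}| ^ 2
   = #|collision_set k| * #|{: table}|)%N.
Proof.
have shift_fiber z T : (round_diffs (shift_table z T) == z) = (round_diffs T == 0).
  by rewrite round_diffs_shift -subr_eq0 addrK.
rewrite -(card_preim_shift (collision_set k) shift_table_inj shift_fiber).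
rewrite card_prod expnS expn1; congr (_ * _)%N.
by apply: eq_card => T; rewrite [LHS]in_set paired4_round [RHS]in_set.
Qed.

End Round.

Section FoldRcons.
Variables (T I : Type) (f : seq T -> I -> T).
Local Notation step := (fun s i => rcons s (f s i)).

Lemma size_foldl_rcons l s : size (foldl step s l) = (size s + size l)%N.
Proof. by elim: l s => [|i l IHl] s /=; rewrite ?addn0 // IHl size_rcons addSnnS. Qed.

Lemma nth_foldl_rcons x0 l s j : (j < size s)%N -> nth x0 (foldl step s l) j = nth x0 s j.
Proof.
elim: l s => [|i l IHl] s //= lt_js.
by rewrite IHl ?nth_rcons ?lt_js // size_rcons ltnW.
Qed.

End FoldRcons.

Lemma foldl_map_eq (T I J : Type) (f : T -> J -> T) (g : T -> I -> T) (h : I -> J) z s :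
  (forall a i, f a (h i) = g a i) -> foldl f z (map h s) = foldl g z s.
Proof. by move=> fhg; elim: s z => //= i s IHs z; rewrite fhg IHs. Qed.

Section DerivedKeys.
Variables k c : nat.

Definition round_table i := {ffun 'I_(c + i) -> {ffun Sigma k -> Sigma k}}.

Definition init_tables d (tab : tables k c d.+1) : tables k c d :=
  [ffun i => tab (widen_ord (leqnSn d) i)].

Definition last_table d (tab : tables k c d.+1) : round_table d := tab ord_max.

Lemma size_derived_seq d (tab : tables k c d) x : size (derived_seq tab x) = (c + d)%N.
Proof. by rewrite size_foldl_rcons size_map !size_enum_ord. Qed.

Lemma nth_derived_seq d (tab : tables k c d) x (j : 'I_c) : (derived_seq tab x)`_j = x j.
Proof.
rewrite /derived_seq nth_foldl_rcons; last by rewrite size_map size_enum_ord.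
by rewrite (nth_map j) ?nth_ord_enum ?size_enum_ord.
Qed.

Lemma derived_seqS d (tab : tables k c d.+1) x :
  derived_seq tab x = rcons (derived_seq (init_tables tab) x)
    (simple_tab (last_table tab) (derived_seq (init_tables tab) x)).
Proof.
rewrite [LHS]/derived_seq enum_ordSr foldl_rcons (foldl_map_eq _ _ (g := fun s i =>
  rcons s (simple_tab (init_tables tab i) s))) //.
by move=> s i; rewrite ffunE.
Qed.

Lemma derived_key_inj d (tab : tables k c d) : injective (derived_key tab).
Proof.
move=> x y /ffunP eq_xy; apply/ffunP => j.
by have := eq_xy (lshift d j); rewrite !ffunE /= !nth_derived_seq.
Qed.

Lemma card_tablesS d : #|{: tables k c d.+1}| = (#|{: tables k c d}| * #|{: round_table d}|)%N.
Proof.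
have card_tables n : #|{: tables k c n}| = (\prod_(i < n) #|{: round_table i}|)%N.
  by rewrite card_dep_ffun foldrE big_map big_enum.
by rewrite !card_tables big_ord_recr.
Qed.

Lemma split_tables_bij d :
  bijective (fun tab : tables k c d.+1 => (init_tables tab, last_table tab)).
Proof.
apply: inj_card_bij; last by rewrite card_prod card_tablesS.
move=> tab tab' [/ffunP eq_init eq_last]; apply/ffunP => i.
have [lt_id | ge_id] := ltnP i d.
  have -> : i = widen_ord (leqnSn d) (Ordinal lt_id) by apply: val_inj.
  by have := eq_init (Ordinal lt_id); rewrite !ffunE.
have -> : i = ord_max by apply/val_inj/eqP; rewrite eqn_leq -ltnS ltn_ord ge_id.
exact: eq_last.
Qed.

Lemma card_tables_split d (P : tables k c d -> round_table d -> bool) :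
  #|[set tab : tables k c d.+1 | P (init_tables tab) (last_table tab)]| =
  (\sum_(t : tables k c d) #|[set T | P t T]|)%N.
Proof.
transitivity #|[set p : tables k c d * round_table d | P p.1 p.2]|.
  rewrite -(on_card_preimset (onW_bij _ (split_tables_bij d))).
  by apply: eq_card => tab; rewrite !inE.
exact: card_set_pair.
Qed.

End DerivedKeys.

Section FourKeys.
Variables (k b : nat) (Y : {set key k b}).

Lemma zero_set_imset4 b' (f : key k b -> key k b') x0 x1 x2 x3 :
  injective f -> perm_eq (enum Y) [:: x0; x1; x2; x3] ->
  zero_set (f @: Y) = [forall i, paired4 (f x0 i) (f x1 i) (f x2 i) (f x3 i)].
Proof.
move=> f_inj Y_enum; apply: eq_forallb => i; rewrite -even_count_mem4.
by apply: eq_forallb => a; rewrite (card_imset_count _ f_inj Y_enum).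
Qed.

Hypothesis Y_zero : zero_set Y.

Lemma zero_set_paired4 x0 x1 x2 x3 : perm_eq (enum Y) [:: x0; x1; x2; x3] ->
  forall i, paired4 (x0 i) (x1 i) (x2 i) (x3 i).
Proof.
move=> Y_enum; apply/forallP.
by rewrite -(zero_set_imset4 (f := id)) ?imset_id.
Qed.

Lemma enum4_matched x0 x1 x2 x3 : perm_eq (enum Y) [:: x0; x1; x2; x3] ->
  exists j, matched_at x0 x1 x2 x3 j \/ matched_at x0 x1 x3 x2 j.
Proof.
move=> Y_enum.
have neq01 : x0 != x1.
  by move: (enum_uniq (mem Y)); rewrite (perm_uniq Y_enum) /= !inE negb_or => /andP[/andP[]].
have [j neq01_j] : exists j, x0 j != x1 j.
  apply/existsP; move: neq01; apply: contraR => /existsPn eq01.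
  by apply/eqP/ffunP => j; apply/eqP/negPn/eq01.
exists j; move: (zero_set_paired4 Y_enum j); rewrite paired4_neq //.
by case/orP => /andP[eq02 eq13]; [left | right]; rewrite /matched_at eq02 eq13.
Qed.

Lemma zero_set4_matched : #|Y| = 4%N ->
  exists x0 x1 x2 x3 j1 j2, [/\ perm_eq (enum Y) [:: x0; x1; x2; x3],
    matched_at x0 x1 x2 x3 j1 & matched_at x0 x2 x1 x3 j2].
Proof.
rewrite cardE => size_Y.
have [a0 [a1 [a2 [a3 Y_enum]]]] : exists a0 a1 a2 a3, perm_eq (enum Y) [:: a0; a1; a2; a3].
  by move: size_Y; case: (enum Y) => [|a0 [|a1 [|a2 [|a3 []]]]] // _; exists a0, a1, a2, a3.
wlog [j1 matched1] : a2 a3 Y_enum / exists j1, matched_at a0 a1 a2 a3 j1.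
  move=> wlog_matched; have [j1 [matched1 | matched1]] := enum4_matched Y_enum.
    by apply: wlog_matched Y_enum _; exists j1.
  apply: (wlog_matched a3 a2); last by exists j1.
  by apply: perm_trans Y_enum _; apply/permP => p /=; lia.
have [j2 [matched2 | matched2]] :
    exists j2, matched_at a0 a2 a1 a3 j2 \/ matched_at a0 a2 a3 a1 j2.
- by apply: enum4_matched; apply: perm_trans Y_enum _; apply/permP => p /=; lia.
- by exists a0, a1, a2, a3, j1, j2.
exists a0, a3, a2, a1, j1, j2; split; [|exact: matched_atC | by []].
by apply: perm_trans Y_enum _; apply/permP => p /=; lia.
Qed.

End FourKeys.

Definition round_prob k : rat := #|collision_set k|%:R / (#|{: Sigma k}| ^ 2)%:R.

Section Survival.
Variables (k c : nat) (Y : {set key k c}) (x0 x1 x2 x3 : key k c) (j1 j2 : 'I_c).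
Hypothesis Y_zero : zero_set Y.
Hypothesis Y_enum : perm_eq (enum Y) [:: x0; x1; x2; x3].
Hypothesis matched1 : matched_at x0 x1 x2 x3 j1.
Hypothesis matched2 : matched_at x0 x2 x1 x3 j2.

Definition round_survivors d (t : tables k c d) : {set round_table k c d} :=
  [set T | paired4 (simple_tab T (derived_seq t x0)) (simple_tab T (derived_seq t x1))
                   (simple_tab T (derived_seq t x2)) (simple_tab T (derived_seq t x3))].

Lemma survivesE d (tab : tables k c d) : survives Y tab = paired_upto (c + d)
  (derived_seq tab x0) (derived_seq tab x1) (derived_seq tab x2) (derived_seq tab x3).
Proof.
rewrite /survives (zero_set_imset4 (@derived_key_inj _ _ _ tab) Y_enum).
by apply: eq_forallb => i; rewrite !ffunE.
Qed.

Lemma survivesS d (tab : tables k c d.+1) : survives Y tab =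
  survives Y (init_tables tab) && (last_table tab \in round_survivors (init_tables tab)).
Proof.
by rewrite !survivesE !(derived_seqS tab) addnS paired_upto_rcons ?size_derived_seq ?inE.
Qed.

Lemma survives0 (tab : tables k c 0) : survives Y tab.
Proof.
rewrite survivesE; apply/forallP => -[j]; rewrite addn0 => lt_jc /=.
by rewrite !(nth_derived_seq tab _ (Ordinal lt_jc)) (zero_set_paired4 Y_zero Y_enum).
Qed.

Lemma card_round_survivors d (t : tables k c d) : survives Y t ->
  (#|round_survivors t| * #|{: Sigma k}| ^ 2
   = #|collision_set k| * #|{: round_table k c d}|)%N.
Proof.
rewrite survivesE => t_paired.
by apply: (card_paired4_round t_paired (j1 := lshift d j1) (j2 := lshift d j2));
  rewrite /matched_at /= !nth_derived_seq.
Qed.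

Lemma card_survivorsS d : #|[set tab : tables k c d.+1 | survives Y tab]| =
  (\sum_(t : tables k c d | survives Y t) #|round_survivors t|)%N.
Proof.
pose P (t : tables k c d) (T : round_table k c d) := survives Y t && (T \in round_survivors t).
transitivity #|[set tab : tables k c d.+1 | P (init_tables tab) (last_table tab)]|.
  by apply: eq_card => tab; rewrite !inE survivesS.
rewrite card_tables_split [RHS]big_mkcond /=; apply: eq_bigr => t _.
rewrite /P; case: (survives Y t) => /=; first by apply: eq_card => T; rewrite inE.
by apply/eqP; rewrite cards_eq0; apply/eqP/setP => T; rewrite !inE.
Qed.

Lemma survive_probS d : survive_prob d.+1 Y = survive_prob d Y * round_prob k.
Proof.
have R_gt0 : (0 < #|{: round_table k c d}|)%N.
  by apply/card_gt0P; exists [ffun _ => [ffun _ => 0]].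
have N2_neq0 : (#|{: Sigma k}| ^ 2)%:R != 0 :> rat.
  by rewrite pnatr_eq0 -lt0n expn_gt0 card_Sigma_gt0.
rewrite /survive_prob card_survivorsS card_tablesS natr_sum natrM.
rewrite (eq_bigr (fun _ => round_prob k * #|{: round_table k c d}|%:R)) => [|t surv_t].
  rewrite sumr_const -[_ *+ _]mulr_natl.
  rewrite (eq_card (B := [set t | survives Y t])) => [|t]; last by rewrite inE.
  by rewrite mulrA invfM mulrA (mulrAC _ _%:R) mulfK ?pnatr_eq0 -?lt0n // mulrAC.
apply: (mulIf N2_neq0).
by rewrite -natrM card_round_survivors // /round_prob natrM mulrAC divfK.
Qed.

Lemma survive_prob0 : survive_prob 0 Y = 1.
Proof.
have tables_gt0 : (0 < #|{: tables k c 0}|)%N.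
  apply/card_gt0P.
  by exists (finfun (fun i : 'I_0 => [ffun _ => [ffun _ => 0]] : round_table k c i)).
rewrite /survive_prob (eq_card (B := predT)) => [|tab]; last by rewrite inE survives0.
by rewrite divff // pnatr_eq0 -lt0n.
Qed.

End Survival.

Lemma round_probE k :
  round_prob k = (3 - 2 / (#|{: Sigma k}|%:R : rat)) / (#|{: Sigma k}|%:R : rat).
Proof.
have N_neq0 : (#|{: Sigma k}|%:R : rat) != 0 by rewrite pnatr_eq0 -lt0n card_Sigma_gt0.
have card_eq := congr1 (fun n => n%:R : rat) (card_collision_set k).
rewrite /= natrD natrM in card_eq.
rewrite /round_prob natrX (_ : #|collision_set k|%:R = 3 * #|{: Sigma k}|%:R - 2).
  by field.
by rewrite -card_eq addrK.
Qed.

Theorem corollary8p2 (k c d : nat) (Y : {set key k c}) :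
  (2 <= c)%N -> (1 <= d)%N -> zero_set Y -> #|Y| = 4%N ->
  survive_prob d Y =
  ((3 - 2 / (#|{: Sigma k}|%:R : rat)) / (#|{: Sigma k}|%:R : rat)) ^+ d.
Proof.
move=> _ _ Y_zero card_Y; rewrite -round_probE.
have [x0 [x1 [x2 [x3 [j1 [j2 [Y_enum matched1 matched2]]]]]]] :=
  zero_set4_matched Y_zero card_Y.
elim: d => [|d IHd]; first by rewrite (survive_prob0 Y_zero Y_enum).
by rewrite (survive_probS Y_enum matched1 matched2) IHd exprSr.
Qed.
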